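(* Consider the constrained online prediction problem and the \texttt{BanditQ} policy described in the context, run for a horizon of $T$ rounds with the constant parameter $V_t = V = \Theta(\sqrt{T})$ for all $t \ge 1$. Then for every protected user $i \in \mathcal{P}$ and every round $1 \le t \le T$, the state variable satisfies $Q_i(t) = O(T^{3/4})$, where the constant hidden in the $O(\cdot)$ does not depend on $T$, $t$ or the reward sequence (it may depend on $N$ and on the constant in $V=\Theta(\sqrt{T})$).
   Context: There are $N$ users. On each round $t=1,2,\dots$ an online policy chooses a probability vector $\bm{x}(t)=(x_1(t),\dots,x_N(t))$ in the standard simplex $\Delta_N=\{\bm{x}\in\mathbb{R}^N_{\ge 0}:\sum_i x_i=1\}$; afterwards an adversarially chosen reward vector $\bm{r}(t)=(r_1(t),\dots,r_N(t))\in[0,1]^N$ is revealed (full information), and the policy may use all past reward vectors to choose $\bm{x}(t+1)$. A subset $\mathcal{P}\subseteq[N]$ of protected users is given, with target rates $\lambda_i\in[0,1]$, $i\in\mathcal{P}$, satisfying $\sum_{i\in\mathcal{P}}\lambda_i\le 1$; set $\lambda_i=0$ for $i\notin\mathcal{P}$. The feasible set of stationary actions is $\Omega=\{\bm{x}^*\in\Delta_N : r_i(t)x^*_i\ge\lambda_i \text{ for all } i\in\mathcal{P} \text{ and all rounds } t\}$, which is assumed nonempty. The regret of a policy over $T$ rounds is $\mathrm{Regret}_T=\sup_{\bm{x}^*\in\Omega}\sum_{t=1}^T\sum_{i=1}^N r_i(t)\,(x_i^*-x_i(t))$. The \texttt{BanditQ} policy: for each $i\in\mathcal{P}$ maintain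 $Q_i(0)=0$ and $Q_i(t)=\max\big(0,\,Q_i(t-1)+\lambda_i-r_i(t)x_i(t)\big)$; for $i\notin\mathcal{P}$ set $Q_i(t)=0$ for all $t$. Given a non-negative parameter sequence $(V_t)_{t\ge1}$, define surrogate rewards $r'_i(t)=(Q_i(t-1)+V_t)\,r_i(t)$ for all $i\in[N]$. Starting from an arbitrary $\bm{x}(1)\in\Delta_N$, the policy updates by adaptive online gradient ascent: $\bm{x}(t+1)=\Pi_{\Delta_N}\Big(\bm{x}(t)+\bm{r}'(t)\big/\sqrt{2\sum_{\tau=1}^{t}\|\bm{r}'(\tau)\|_2^2}\Big)$, where $\Pi_{\Delta_N}$ denotes Euclidean projection onto $\Delta_N$. *)

From HB Require Import structures.
From mathcomp Require Import all_boot all_order all_algebra.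
From mathcomp Require Import reals exp.
Set Implicit Arguments. Unset Strict Implicit. Unset Printing Implicit Defensive.
Import Order.TTheory GRing.Theory Num.Theory.
Local Open Scope ring_scope.

Section BanditQ.
Variables (R : realType) (N : nat).

Definition in_simplex (x : 'I_N -> R) : Prop :=
  (forall i, 0 <= x i) /\ \sum_(i < N) x i = 1.

Definition sqnorm (y : 'I_N -> R) : R := \sum_(i < N) (y i) ^+ 2.

Definition is_proj_simplex (y p : 'I_N -> R) : Prop :=
  in_simplex p /\
  forall z, in_simplex z -> sqnorm (fun i => y i - p i) <= sqnorm (fun i => y i - z i).

Definition in_Omega (T : nat) (P : {set 'I_N}) (lam : 'I_N -> R)
    (r : nat -> 'I_N -> R) (xs : 'I_N -> R) : Prop :=
  in_simplex xs /\
  forall i t, i \in P -> (1 <= t <= T)%N -> lam i <= r t i * xs i.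

Fixpoint Qlen (P : {set 'I_N}) (lam : 'I_N -> R) (r x : nat -> 'I_N -> R)
    (t : nat) (i : 'I_N) : R :=
  match t with
  | 0 => 0
  | t'.+1 => if i \in P
             then Num.max 0 (Qlen P lam r x t' i + lam i - r t i * x t i)
             else 0
  end.

Definition surrogate (P : {set 'I_N}) (lam : 'I_N -> R) (Vs : nat -> R)
    (r x : nat -> 'I_N -> R) (t : nat) : 'I_N -> R :=
  fun i => (Qlen P lam r x t.-1 i + Vs t) * r t i.

Definition ogd_point (P : {set 'I_N}) (lam : 'I_N -> R) (Vs : nat -> R)
    (r x : nat -> 'I_N -> R) (t : nat) : 'I_N -> R :=
  fun i => x t i + surrogate P lam Vs r x t i /
    Num.sqrt (2 * \sum_(1 <= tau < t.+1) sqnorm (surrogate P lam Vs r x tau)).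

Definition banditQ_traj (P : {set 'I_N}) (lam : 'I_N -> R) (Vs : nat -> R)
    (r x : nat -> 'I_N -> R) : Prop :=
  in_simplex (x 1%N) /\
  forall t, (1 <= t)%N -> is_proj_simplex (ogd_point P lam Vs r x t) (x t.+1).

End BanditQ.

From HB Require Import structures.
From mathcomp Require Import all_boot all_order all_algebra.
From mathcomp Require Import reals exp.
From mathcomp Require Import ring lra.
Import Order.TTheory GRing.Theory Num.Theory.
Set Implicit Arguments. Unset Strict Implicit. Unset Printing Implicit Defensive.
Local Open Scope ring_scope.

(* The squared queue norm L(t) = sum_i Q_i(t)^2 is a Lyapunov function.  As a
   feasible stationary action xs meets every target rate, one round increases L
   by at most twice the surrogate gain <r'(t), xs - x(t)> plus 2V + N.  BanditQ
   is adaptive online gradient ascent on r', whose regret against xs is at most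
   3 sqrt(S) with S = sum_t ||r'(t)||^2, so L(t) <= 6 sqrt(S) + T (2V + N).
   Conversely ||r'(t)||^2 <= 2 L(t-1) + 2 N V^2, hence
   S <= T (12 sqrt(S) + O(T^(3/2))) when V = O(sqrt T).  Solving this quadratic
   inequality gives S = O(T^(5/2)), then L = O(T^(3/2)) and Q_i = O(T^(3/4)). *)

Section RealFacts.
Variable R : rcfType.

Lemma ge0_of_quadratic_ge0 (a d : R) : 0 <= d ->
  (forall s, 0 < s <= 1 -> 0 <= 2 * s * a + s ^+ 2 * d) -> 0 <= a.
Proof.
move=> d_ge0 quad; rewrite leNgt; apply/negP => a_lt0.
pose s := - a / (d - a).
have da_gt0 : 0 < d - a by lra.
have s_gt0 : 0 < s by rewrite divr_gt0 ?oppr_gt0.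
have s_le1 : s <= 1 by rewrite ler_pdivrMr // mul1r; lra.
have sd_le : s * d <= - a by rewrite mulrAC ler_pdivrMr //; nra.
have := quad s; rewrite s_gt0 s_le1 => /(_ isT).
nra.
Qed.

Lemma le_sqrtM_of_sqr_le (a k w : R) :
  0 <= a -> 0 <= w -> a ^+ 2 <= k * w ^+ 2 -> a <= Num.sqrt k * w.
Proof.
move=> a_ge0 w_ge0 le_a.
have -> : a = Num.sqrt (a ^+ 2) by rewrite sqrtr_sqr ger0_norm.
have -> : Num.sqrt k * w = Num.sqrt (w ^+ 2 * k).
  by rewrite sqrtrM ?sqr_ge0 // sqrtr_sqr ger0_norm // mulrC.
by rewrite ler_sqrt mulrC //; apply: le_trans le_a; apply: sqr_ge0.
Qed.

Lemma sqr_le_of_sqr_le_linear (a b c : R) :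
  b ^+ 2 <= a * b + c -> b ^+ 2 <= a ^+ 2 + 2 * c.
Proof. by have := sqr_ge0 (a - b); nra. Qed.

Lemma sqr_max0_le (u : R) : Num.max 0 u ^+ 2 <= u ^+ 2.
Proof. by case: (leP 0 u) => _; rewrite ?lexx // expr2 mul0r sqr_ge0. Qed.

Lemma sum_incr_div_sqrt_le (S : nat -> R) tau :
  0 <= S 0%N -> (forall t, S t <= S t.+1) ->
  \sum_(1 <= t < tau.+1) (S t - S t.-1) / Num.sqrt (S t) <= 2 * Num.sqrt (S tau).
Proof.
move=> S0_ge0 S_incr.
elim: tau => [|tau IH]; first by rewrite big_geq // mulr_ge0 ?sqrtr_ge0.
rewrite big_nat_recr //=.
have S_ge0 t : 0 <= S t by elim: t => // t St_ge0; apply: le_trans St_ge0 (S_incr t).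
set b := Num.sqrt (S tau) in IH *; set b' := Num.sqrt (S tau.+1).
have b_ge0 : 0 <= b := sqrtr_ge0 _.
have bb' : b <= b' by rewrite ler_sqrt.
suff : (S tau.+1 - S tau) / b' <= 2 * (b' - b) by lra.
have [b'0|b'_neq0] := eqVneq b' 0; first by rewrite b'0 invr0 mulr0; lra.
have b'_gt0 : 0 < b' by rewrite lt_def b'_neq0 sqrtr_ge0.
rewrite ler_pdivrMr // -(sqr_sqrtr (S_ge0 tau)) -(sqr_sqrtr (S_ge0 tau.+1)) -/b -/b'.
nra.
Qed.

Lemma weighted_telescope_le (a d : nat -> R) (M : R) tau :
  0 <= a 0%N -> (forall t, a t <= a t.+1) -> (forall t, (1 <= t)%N -> d t <= M) ->
  \sum_(1 <= t < tau.+1) a t * (d t - d t.+1) <= a tau * (M - d tau.+1).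
Proof.
move=> a0_ge0 a_incr d_le; elim: tau => [|tau IH].
  by rewrite big_geq // mulr_ge0 // subr_ge0 d_le.
rewrite big_nat_recr //=.
have := mulr_ge0 (_ : 0 <= a tau.+1 - a tau) (_ : 0 <= M - d tau.+1).
rewrite subr_ge0 a_incr subr_ge0 d_le // => /(_ isT isT).
nra.
Qed.

End RealFacts.

Section Simplex.
Variables (R : realType) (N : nat).
Implicit Types u v y p z : 'I_N -> R.

Definition dot u v : R := \sum_(i < N) u i * v i.

Lemma eq_sqnorm u v : u =1 v -> sqnorm u = sqnorm v.
Proof. by move=> eq_uv; apply: eq_bigr => i _; rewrite eq_uv. Qed.

Lemma sqnorm_ge0 u : 0 <= sqnorm u.
Proof. by apply: sumr_ge0 => i _; apply: sqr_ge0. Qed.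

Lemma sqnorm_eq0 u : sqnorm u = 0 -> forall i, u i = 0.
Proof.
move=> u0 i; apply/eqP; rewrite -sqrf_eq0; apply/eqP.
by move: i isT; apply: psumr_eq0P u0 => i _; apply: sqr_ge0.
Qed.

Lemma sqnormDZ u v (s : R) :
  sqnorm (fun i => u i + s * v i) = sqnorm u + 2 * s * dot u v + s ^+ 2 * sqnorm v.
Proof.
rewrite /sqnorm /dot !mulr_sumr -!big_split /=.
by apply: eq_bigr => i _; ring.
Qed.

Lemma in_simplex_bound y i : in_simplex y -> 0 <= y i <= 1.
Proof.
move=> [y_ge0 y_sum1]; rewrite y_ge0 -y_sum1 (bigD1 i) //= lerDl.
by apply: sumr_ge0 => j _.
Qed.

Lemma sqnorm_sub_simplex_le2 y z : in_simplex y -> in_simplex z ->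
  sqnorm (fun i => y i - z i) <= 2.
Proof.
move=> y_simplex z_simplex.
have -> : 2 = \sum_(i < N) (y i + z i).
  by rewrite big_split /= y_simplex.2 z_simplex.2.
apply: ler_sum => i _.
have := in_simplex_bound i y_simplex; have := in_simplex_bound i z_simplex.
move=> /andP[? ?] /andP[? ?]; nra.
Qed.

Lemma proj_simplex_obtuse y p z : is_proj_simplex y p -> in_simplex z ->
  0 <= dot (fun i => y i - p i) (fun i => p i - z i).
Proof.
move=> [p_simplex p_min] z_simplex.
apply: ge0_of_quadratic_ge0 (sqnorm_ge0 (fun i => p i - z i)) _ => s /andP[s_gt0 s_le1].
have w_simplex : in_simplex (fun i => p i + s * (z i - p i)).
  split.
    move=> i; have := in_simplex_bound i p_simplex; have := in_simplex_bound i z_simplex.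
    move=> /andP[? ?] /andP[? ?]; nra.
  rewrite big_split /= -mulr_sumr sumrB p_simplex.2 z_simplex.2.
  by rewrite subrr mulr0 addr0.
have := p_min _ w_simplex.
rewrite [X in _ <= X -> _](@eq_sqnorm _ (fun i => (y i - p i) + s * (p i - z i))).
  by rewrite sqnormDZ; lra.
by move=> i /=; ring.
Qed.

Lemma proj_simplex_contract y p z : is_proj_simplex y p -> in_simplex z ->
  sqnorm (fun i => p i - z i) <= sqnorm (fun i => y i - z i).
Proof.
move=> proj z_simplex.
rewrite (@eq_sqnorm (fun i => y i - z i) (fun i => (y i - p i) + 1 * (p i - z i))).
  have := proj_simplex_obtuse proj z_simplex; have := sqnorm_ge0 (fun i => y i - p i).
  by rewrite sqnormDZ; lra.
by move=> i; ring.
Qed.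

End Simplex.

Section AdaptiveOGD.
Variables (R : realType) (N : nat) (g : nat -> 'I_N -> R).

Definition cumsqnorm t : R := \sum_(1 <= tau < t.+1) sqnorm (g tau).

Definition adaptive_ogd (x : nat -> 'I_N -> R) : Prop :=
  in_simplex (x 1%N) /\
  forall t, (1 <= t)%N ->
    is_proj_simplex (fun i => x t i + g t i / Num.sqrt (2 * cumsqnorm t)) (x t.+1).

Lemma cumsqnormS t : cumsqnorm t.+1 = cumsqnorm t + sqnorm (g t.+1).
Proof. by rewrite /cumsqnorm big_nat_recr. Qed.

Lemma cumsqnorm_ge0 t : 0 <= cumsqnorm t.
Proof. by apply: sumr_ge0 => tau _; apply: sqnorm_ge0. Qed.

Lemma cumsqnorm_le t : cumsqnorm t <= cumsqnorm t.+1.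
Proof. by rewrite cumsqnormS lerDl sqnorm_ge0. Qed.

Lemma cumsqnorm_homo : {homo cumsqnorm : s t / (s <= t)%N >-> s <= t}.
Proof. exact: homo_leq (@lexx _ R) (@le_trans _ R) cumsqnorm_le. Qed.

Lemma sqnorm_le_cumsqnorm t : (1 <= t)%N -> sqnorm (g t) <= cumsqnorm t.
Proof. by case: t => // t _; rewrite cumsqnormS lerDr cumsqnorm_ge0. Qed.

(* [A t] is the inverse step size of round [t]. *)
Let A t := Num.sqrt (2 * cumsqnorm t).

Lemma sqrt2_cumsqnorm_le t : A t <= A t.+1.
Proof. by rewrite ler_sqrt ?ler_pM2l ?cumsqnorm_le // mulr_ge0 ?cumsqnorm_ge0. Qed.

Lemma sqrt2_cumsqnorm_le_2sqrt t : A t <= 2 * Num.sqrt (cumsqnorm t).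
Proof.
have -> : 2 * Num.sqrt (cumsqnorm t) = Num.sqrt (2 ^+ 2 * cumsqnorm t).
  by rewrite sqrtrM ?sqr_ge0 // sqrtr_sqr ger0_norm.
by rewrite ler_sqrt ?mulr_ge0 ?sqr_ge0 ?cumsqnorm_ge0 //; have := cumsqnorm_ge0 t; lra.
Qed.

Lemma inv_sqrt2_cumsqnorm_le t : (A t)^-1 <= (Num.sqrt (cumsqnorm t))^-1.
Proof.
have S_ge0 := cumsqnorm_ge0 t.
have [S0|S_neq0] := eqVneq (Num.sqrt (cumsqnorm t)) 0.
  move/eqP: (S0); rewrite sqrtr_eq0 => S_le0.
  have /eqP -> : A t == 0 by rewrite sqrtr_eq0; lra.
  by rewrite S0.
have S_gt0 : 0 < Num.sqrt (cumsqnorm t) by rewrite lt_def S_neq0 sqrtr_ge0.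
by rewrite lef_pV2 ?posrE ?(lt_le_trans S_gt0) // ler_sqrt ?mulr_ge0 //; lra.
Qed.

Lemma sum_sqnorm_div_sqrt2_cumsqnorm_le tau :
  \sum_(1 <= t < tau.+1) sqnorm (g t) / (2 * A t) <= Num.sqrt (cumsqnorm tau).
Proof.
apply: le_trans (_ : \sum_(1 <= t < tau.+1)
  (cumsqnorm t - cumsqnorm t.-1) / Num.sqrt (cumsqnorm t) / 2 <= _).
  apply: ler_sum_nat => t /andP[t_ge1 _].
  have -> : cumsqnorm t - cumsqnorm t.-1 = sqnorm (g t).
    by case: t t_ge1 => // t _; rewrite cumsqnormS /=; ring.
  by have := inv_sqrt2_cumsqnorm_le t; have := sqnorm_ge0 (g t); rewrite invfM; nra.
rewrite -mulr_suml.
by have := sum_incr_div_sqrt_le tau (cumsqnorm_ge0 0%N) cumsqnorm_le; lra.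
Qed.

Variable x : nat -> 'I_N -> R.
Hypothesis ogd : adaptive_ogd x.

Let D z t := sqnorm (fun i => x t i - z i).

Lemma adaptive_ogd_simplex t : (1 <= t)%N -> in_simplex (x t).
Proof.
case: ogd => x1_simplex proj; elim: t => [//|[|t] IH] _ //.
by case: (proj t.+1 isT).
Qed.

Lemma adaptive_ogd_step z t : in_simplex z -> (1 <= t)%N ->
  dot (g t) (fun i => z i - x t i) <=
  A t * (D z t - D z t.+1) / 2 + sqnorm (g t) / (2 * A t).
Proof.
move=> z_simplex t_ge1.
(* If [A t = 0] then [g t = 0] and both sides vanish, as [x / 0 = 0]. *)
have [A0|A_neq0] := eqVneq (A t) 0.
  have g0 : forall i, g t i = 0.
    apply: sqnorm_eq0; apply/eqP; rewrite eq_le sqnorm_ge0 andbT.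
    apply: le_trans (sqnorm_le_cumsqnorm t_ge1) _.
    by move/eqP: A0; rewrite sqrtr_eq0; lra.
  rewrite A0 !(mul0r, mulr0, invr0, addr0) /dot big1 // => i _.
  by rewrite g0 mul0r.
have A_gt0 : 0 < A t by rewrite lt_def A_neq0 sqrtr_ge0.
have contract : D z t.+1 <= sqnorm (fun i => (x t i - z i) + (A t)^-1 * g t i).
  rewrite (@eq_sqnorm _ _ (fun i => (x t i - z i) + (A t)^-1 * g t i)
                          (fun i => x t i + g t i / A t - z i)).
    exact: proj_simplex_contract (ogd.2 t t_ge1) z_simplex.
  by move=> i; ring.
have dotN : dot (fun i => x t i - z i) (g t) = - dot (g t) (fun i => z i - x t i).
  by rewrite /dot -sumrN; apply: eq_bigr => i _; ring.
rewrite sqnormDZ -/(D z t) dotN in contract.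
have := ler_wpM2l (ltW A_gt0) contract.
have -> : A t * (D z t + 2 * (A t)^-1 * - dot (g t) (fun i => z i - x t i)
                  + (A t)^-1 ^+ 2 * sqnorm (g t))
          = A t * D z t - 2 * dot (g t) (fun i => z i - x t i) + sqnorm (g t) / A t.
  by field.
have -> : sqnorm (g t) / (2 * A t) = sqnorm (g t) / A t / 2 by field.
lra.
Qed.

Lemma adaptive_ogd_regret z tau : in_simplex z ->
  \sum_(1 <= t < tau.+1) dot (g t) (fun i => z i - x t i)
    <= 3 * Num.sqrt (cumsqnorm tau).
Proof.
move=> z_simplex.
have D_le2 t (t_ge1 : (1 <= t)%N) : D z t <= 2.
  exact: sqnorm_sub_simplex_le2 (adaptive_ogd_simplex t_ge1) z_simplex.
apply: le_trans (_ : \sum_(1 <= t < tau.+1)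
  (A t * (D z t - D z t.+1) / 2 + sqnorm (g t) / (2 * A t)) <= _).
  by apply: ler_sum_nat => t /andP[t_ge1 _]; apply: adaptive_ogd_step.
rewrite big_split /= -mulr_suml.
have := weighted_telescope_le tau (sqrtr_ge0 _) sqrt2_cumsqnorm_le D_le2.
have := sum_sqnorm_div_sqrt2_cumsqnorm_le tau.
have := mulr_ge0 (sqrtr_ge0 (2 * cumsqnorm tau)) (sqnorm_ge0 (fun i => x tau.+1 i - z i)).
have := sqrt2_cumsqnorm_le_2sqrt tau.
rewrite /A /D; lra.
Qed.

End AdaptiveOGD.

Lemma banditQ_traj_adaptive_ogd (R : realType) (N : nat) (P : {set 'I_N})
    (lam : 'I_N -> R) (Vs : nat -> R) (r x : nat -> 'I_N -> R) :
  banditQ_traj P lam Vs r x -> adaptive_ogd (surrogate P lam Vs r x) x.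
Proof. by []. Qed.

Section Queues.
Variables (R : realType) (N : nat) (P : {set 'I_N}) (lam : 'I_N -> R)
  (r x : nat -> 'I_N -> R).

Lemma Qlen_ge0 t i : 0 <= Qlen P lam r x t i.
Proof. by case: t => [|t] //=; case: (i \in P); rewrite // le_max lexx. Qed.

Lemma Qlen_notin t i : i \notin P -> Qlen P lam r x t i = 0.
Proof. by case: t => //= t /negbTE ->. Qed.

End Queues.

Section BanditQ.
Variables (R : realType) (N : nat) (P : {set 'I_N}) (lam : 'I_N -> R) (V : R)
  (r x : nat -> 'I_N -> R) (T : nat) (xs : 'I_N -> R).
Hypothesis V_ge0 : 0 <= V.
Hypothesis lam_bound : forall i, i \in P -> 0 <= lam i <= 1.
Hypothesis r_bound : forall t i, 0 <= r t i <= 1.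
Hypothesis traj : banditQ_traj P lam (fun _ => V) r x.
Hypothesis xs_feasible : in_Omega T P lam r xs.

Let Q := Qlen P lam r x.
Let g := surrogate P lam (fun _ => V) r x.
Let L t := \sum_(i < N) Q t i ^+ 2.

Lemma Qlen_sqr_drift t i : (1 <= t <= T)%N ->
  Q t i ^+ 2 <= Q t.-1 i ^+ 2 + 2 * (g t i * (xs i - x t i)) + 2 * V * x t i + 1.
Proof.
case: t => [//|t] t_le.
have /andP[x_ge0 x_le1] := in_simplex_bound i
  (adaptive_ogd_simplex (banditQ_traj_adaptive_ogd traj) (isT : (1 <= t.+1)%N)).
have xs_ge0 : 0 <= xs i := xs_feasible.1.1 i.
have /andP[r_ge0 r_le1] := r_bound t.+1 i.
have Q_ge0 := Qlen_ge0 P lam r x t i.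
have Vrxs_ge0 : 0 <= V * r t.+1 i * xs i by rewrite !mulr_ge0.
have Vx_ge0 : 0 <= V * x t.+1 i * (1 - r t.+1 i) by rewrite !mulr_ge0 // subr_ge0.
rewrite /g /surrogate /=.
have [iP|iNP] := boolP (i \in P); last first.
  by rewrite /Q /= (negbTE iNP) Qlen_notin //; lra.
have /andP[lam_ge0 lam_le1] := lam_bound iP.
(* Feasibility of [xs] turns the queue increment into the surrogate gain. *)
have lam_le : lam i <= r t.+1 i * xs i by apply: xs_feasible.2.
rewrite /Q /= iP -/(Q t i).
apply: le_trans (sqr_max0_le _) _.
have rx_le1 : r t.+1 i * x t.+1 i <= 1 by rewrite -[1]mulr1 ler_pM.
have rx_ge0 : 0 <= r t.+1 i * x t.+1 i by rewrite mulr_ge0.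
have Q_lam : 0 <= Q t i * (r t.+1 i * xs i - lam i) by rewrite mulr_ge0 // subr_ge0.
have : (lam i - r t.+1 i * x t.+1 i) ^+ 2 <= 1 by nra.
lra.
Qed.

Lemma lyapunov_drift t : (1 <= t <= T)%N ->
  L t <= L t.-1 + 2 * dot (g t) (fun i => xs i - x t i) + 2 * V + N%:R.
Proof.
move=> t_bounds.
have /andP[t_ge1 _] := t_bounds.
have x_simplex := adaptive_ogd_simplex (banditQ_traj_adaptive_ogd traj) t_ge1.
apply: le_trans (ler_sum _ (fun i _ => Qlen_sqr_drift i t_bounds)) _.
rewrite !big_split /= -!mulr_sumr x_simplex.2 sumr_const card_ord.
by rewrite mulr1 -[1 *+ N]/(N%:R).
Qed.

Lemma lyapunov_le_regret tau : (tau <= T)%N ->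
  L tau <= 2 * \sum_(1 <= t < tau.+1) dot (g t) (fun i => xs i - x t i)
           + tau%:R * (2 * V + N%:R).
Proof.
elim: tau => [|tau IH] tau_le.
  by rewrite big_geq // mul0r addr0 mulr0 /L big1 // => i _; rewrite expr2 mul0r.
rewrite big_nat_recr //= -natr1.
have := lyapunov_drift (_ : (1 <= tau.+1 <= T)%N); rewrite tau_le => /(_ isT).
have := IH (ltnW tau_le); lra.
Qed.

Lemma lyapunov_le tau : (tau <= T)%N ->
  L tau <= 6 * Num.sqrt (cumsqnorm g T) + T%:R * (2 * V + N%:R).
Proof.
move=> tau_le.
have := lyapunov_le_regret tau_le.
have := adaptive_ogd_regret (banditQ_traj_adaptive_ogd traj) tau xs_feasible.1.
have : Num.sqrt (cumsqnorm g tau) <= Num.sqrt (cumsqnorm g T).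
  by rewrite ler_sqrt ?cumsqnorm_ge0 ?cumsqnorm_homo.
have : tau%:R * (2 * V + N%:R) <= T%:R * (2 * V + N%:R).
  by rewrite ler_wpM2r ?ler_nat // addr_ge0 ?mulr_ge0.
lra.
Qed.

Lemma surrogate_sqnorm_le t : sqnorm (g t) <= 2 * L t.-1 + 2 * N%:R * V ^+ 2.
Proof.
apply: le_trans (_ : \sum_(i < N) (2 * Q t.-1 i ^+ 2 + 2 * V ^+ 2) <= _).
  apply: ler_sum => i _; rewrite /g /surrogate -/(Q t.-1 i).
  have /andP[r_ge0 r_le1] := r_bound t i.
  have := sqr_ge0 (Q t.-1 i - V).
  have := mulr_ge0 (sqr_ge0 (Q t.-1 i + V)) (_ : 0 <= 1 - r t i ^+ 2).
  nra.
rewrite big_split /= -!mulr_sumr sumr_const card_ord -mulr_natl /L; lra.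
Qed.

Lemma cumsqnorm_surrogate_le :
  cumsqnorm g T <= (12 * T%:R) ^+ 2
                   + 2 * (T%:R * (2 * T%:R * (2 * V + N%:R) + 2 * N%:R * V ^+ 2)).
Proof.
set s := Num.sqrt (cumsqnorm g T).
have S_le : cumsqnorm g T
            <= 12 * T%:R * s + T%:R * (2 * T%:R * (2 * V + N%:R) + 2 * N%:R * V ^+ 2).
  apply: le_trans (_ : \sum_(1 <= t < T.+1)
    (12 * s + 2 * T%:R * (2 * V + N%:R) + 2 * N%:R * V ^+ 2) <= _); last first.
    by rewrite sumr_const_nat subn1 /= -mulr_natl; lra.
  apply: ler_sum_nat => t /andP[_ t_le].
  apply: le_trans (surrogate_sqnorm_le t) _.
  by have := lyapunov_le (leq_trans (leq_pred t) t_le); rewrite -/s; lra.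
rewrite -(sqr_sqrtr (cumsqnorm_ge0 g T)) -/s; apply: sqr_le_of_sqr_le_linear.
by rewrite /s sqr_sqrtr ?cumsqnorm_ge0 //; lra.
Qed.

Lemma Qlen_sqr_le t i : (t <= T)%N ->
  Q t i ^+ 2 <= 6 * Num.sqrt (cumsqnorm g T) + T%:R * (2 * V + N%:R).
Proof.
move=> t_le; apply: le_trans (lyapunov_le t_le).
by rewrite /L (bigD1 i) //= lerDl; apply: sumr_ge0 => j _; apply: sqr_ge0.
Qed.

End BanditQ.

Lemma powR34_sqr (R : realType) (a : R) :
  0 <= a -> (a `^ (3 / 4)) ^+ 2 = Num.sqrt a ^+ 3.
Proof.
move=> a_ge0.
rewrite -powR_mulrn ?powR_ge0 // -powR12_sqrt // -powR_mulrn ?powR_ge0 // -!powRrM.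
by congr (a `^ _); field.
Qed.

Lemma banditQ_energy_poly_le (R : realFieldType) (c n q V : R) :
  0 <= c -> 0 <= n -> 1 <= q -> 0 <= V <= c * q ->
  (12 * q ^+ 2) ^+ 2 + 2 * (q ^+ 2 * (2 * q ^+ 2 * (2 * V + n) + 2 * n * V ^+ 2))
    <= (144 + 8 * c + 4 * n + 4 * n * c ^+ 2) * (q ^+ 3) ^+ 2.
Proof.
move=> c_ge0 n_ge0 q_ge1 /andP[V_ge0 V_le].
have q_ge0 : 0 <= q by lra.
have q46 : 0 <= q ^+ 6 - q ^+ 4 by rewrite subr_ge0 ler_weXn2l.
have q56 : 0 <= q ^+ 6 - q ^+ 5 by rewrite subr_ge0 ler_weXn2l.
have Vq : V * q ^+ 4 <= c * q * q ^+ 4 by rewrite ler_wpM2r ?exprn_ge0.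
have V2 : V ^+ 2 <= c ^+ 2 * q ^+ 2.
  by rewrite -exprMn lerXn2r ?nnegrE ?mulr_ge0.
have nV2 : n * V ^+ 2 * q ^+ 2 <= n * (c ^+ 2 * q ^+ 2) * q ^+ 2.
  by rewrite ler_wpM2r ?exprn_ge0 // ler_wpM2l.
have := mulr_ge0 c_ge0 q56.
have := mulr_ge0 n_ge0 q46.
have := mulr_ge0 (mulr_ge0 n_ge0 (sqr_ge0 c)) q46.
lra.
Qed.

Theorem proposition1 (R : realType) (N : nat) (c1 c2 : R) :
  0 < c1 -> c1 <= c2 ->
  exists C : R,
  forall (T : nat) (V : R) (P : {set 'I_N}) (lam : 'I_N -> R)
         (r x : nat -> 'I_N -> R),
    (0 < T)%N ->
    c1 * Num.sqrt (T%:R) <= V <= c2 * Num.sqrt (T%:R) ->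
    (forall i, i \in P -> 0 <= lam i <= 1) ->
    (forall i, i \notin P -> lam i = 0) ->
    \sum_(i in P) lam i <= 1 ->
    (forall t i, 0 <= r t i <= 1) ->
    (exists xs, in_Omega T P lam r xs) ->
    banditQ_traj P lam (fun _ => V) r x ->
    forall (i : 'I_N) (t : nat), i \in P -> (1 <= t <= T)%N ->
      Qlen P lam r x t i <= C * powR (T%:R) (3 / 4).
Proof.
move=> c1_gt0 c1_le_c2; set n : R := N%:R.
set k := 144 + 8 * c2 + 4 * n + 4 * n * c2 ^+ 2.
exists (Num.sqrt (6 * Num.sqrt k + 2 * c2 + n)).
move=> T V P lam r x T_gt0 /andP[V_ge V_le] lam_bound _ _ r_bound [xs feasible] traj
  i t _ /andP[_ t_le].
set q := Num.sqrt (T%:R : R) in V_le *.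
have q_ge1 : 1 <= q by rewrite -sqrtr1 ler_sqrt // ler1n.
have q_ge0 : 0 <= q := le_trans ler01 q_ge1.
have Tq : T%:R = q ^+ 2 by rewrite sqr_sqrtr.
have c2_ge0 : 0 <= c2 by lra.
have V_ge0 : 0 <= V by apply: le_trans V_ge; rewrite mulr_ge0 ?sqrtr_ge0 // ltW.
have n_ge0 : 0 <= n := ler0n _ _.
have S_le := cumsqnorm_surrogate_le V_ge0 lam_bound r_bound traj feasible.
have Q_le := Qlen_sqr_le V_ge0 lam_bound r_bound traj feasible i t_le.
rewrite Tq -/n in S_le Q_le.
have S_root :
    Num.sqrt (cumsqnorm (surrogate P lam (fun=> V) r x) T) <= Num.sqrt k * q ^+ 3.
  apply: le_sqrtM_of_sqr_le; rewrite ?sqrtr_ge0 ?exprn_ge0 ?sqr_sqrtr ?cumsqnorm_ge0 //.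
  by apply: le_trans S_le (banditQ_energy_poly_le c2_ge0 n_ge0 q_ge1 _); rewrite V_ge0.
apply: le_sqrtM_of_sqr_le; [exact: Qlen_ge0 | exact: powR_ge0 |].
rewrite powR34_sqr // -/q.
apply: le_trans Q_le _.
have qV : q ^+ 2 * V <= q ^+ 2 * (c2 * q) by rewrite ler_wpM2l ?exprn_ge0.
have nq : n * q ^+ 2 <= n * q ^+ 3 by rewrite ler_wpM2l // ler_weXn2l.
lra.
Qed.
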